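(* Let $R$ be a left-Noetherian discrete proper normed ring and let $M$ be a Polish $R$-module. Then exactly one of the following holds: (1) $M$ is countable; (2) $\ell^1(S)\sqsubseteq^R M$ for some nonzero quotient ring $S=R/I$ of $R$ (by a proper two-sided ideal $I$, with $S$ given the quotient norm $|r+I|=\min_{s\in r+I}|s|$).
   Context: All rings are unital. A ring is left-Noetherian if every increasing sequence of left ideals stabilizes. A norm on a ring $R$ is a function $|\cdot|\colon R\to[0,\infty)$ such that $(a,b)\mapsto|a-b|$ is a metric and $|rs|\le|r||s|$; it is proper if every closed ball is compact; a proper normed ring is a ring with a proper norm, topologized by this metric. For a Polish ring $R$, a Polish $R$-module is a topological left $R$-module whose topology is Polish. For Polish $R$-modules $M,N$, $M\sqsubseteq^R N$ means there is a continuous $R$-linear injection $M\to N$. For a proper normed ring $S$, $\ell^1(S)=\{(s_k)_{k\in\mathbb N}\in S^{\mathbb N}:\sum_k|s_k|/k!<\infty\}$ with norm $\sum_k|s_k|/k!$; it is a Polish module (over $R$ via the quotient map when $S=R/I$). *)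

From HB Require Import structures.
From mathcomp Require Import all_boot all_order all_algebra.
From mathcomp Require Import all_classical all_reals all_analysis.
From mathcomp Require Import Rstruct Rstruct_topology.

Set Implicit Arguments.
Unset Strict Implicit.
Unset Printing Implicit Defensive.

Import Order.TTheory GRing.Theory Num.Theory.
Local Open Scope classical_set_scope.
Local Open Scope ring_scope.

Definition real : realType := Rdefinitions.R.

Definition is_metric (T : Type) (d : T -> T -> real) : Prop :=
  [/\ forall x y, 0 <= d x y,
      forall x y, d x y = 0 <-> x = y,
      forall x y, d x y = d y x &
      forall x y z, d x z <= d x y + d y z].

Definition metric_open (T : Type) (d : T -> T -> real) (U : set T) : Prop :=
  forall x, U x -> exists2 e : real, 0 < e & forall y, d x y < e -> U y.

Definition metric_cauchy (T : Type) (d : T -> T -> real) (u : nat -> T) : Prop :=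
  forall e : real, 0 < e ->
    exists N : nat, forall m n, (N <= m)%N -> (N <= n)%N -> d (u m) (u n) < e.

Definition metric_converges (T : Type) (d : T -> T -> real) (u : nat -> T) (x : T) : Prop :=
  forall e : real, 0 < e -> exists N : nat, forall n, (N <= n)%N -> d (u n) x < e.

Definition metric_complete (T : Type) (d : T -> T -> real) : Prop :=
  forall u : nat -> T, metric_cauchy d u -> exists x, metric_converges d u x.

Definition is_topology (T : Type) (op : set (set T)) : Prop :=
  [/\ op setT,
      (forall F : set (set T), F `<=` op -> op (\bigcup_(A in F) A)) &
      (forall U V, op U -> op V -> op (U `&` V))].

Definition compact_in (T : Type) (op : set (set T)) (K : set T) : Prop :=
  forall F : set (set T), F `<=` op -> K `<=` \bigcup_(A in F) A ->
    exists (n : nat) (G : nat -> set T),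
      (forall i, (i < n)%N -> F (G i) /\ op (G i)) /\
      K `<=` \bigcup_(i in [set i | (i < n)%N]) G i.

Definition polish (T : Type) (op : set (set T)) : Prop :=
  [/\ is_topology op,
      (exists D : set T, countable D /\
         forall U, op U -> U !=set0 -> (U `&` D) !=set0) &
      (exists d : T -> T -> real,
         [/\ is_metric d, (forall U, op U <-> metric_open d U) & metric_complete d])].

Section NormedRing.
Variable A : pzRingType.
Implicit Types (nr : A -> real).

Definition is_ring_norm nr : Prop :=
  is_metric (fun a b => nr (a - b)) /\ forall r s, nr (r * s) <= nr r * nr s.

Definition norm_open nr : set (set A) := metric_open (fun a b => nr (a - b)).

Definition discrete_norm nr : Prop := forall U : set A, norm_open nr U.

Definition proper_norm nr : Prop :=
  forall (r : A) (c : real), compact_in (norm_open nr) [set s | nr (r - s) <= c].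

Definition left_ideal (J : set A) : Prop :=
  [/\ J 0, (forall x y, J x -> J y -> J (x - y)) & (forall r x, J x -> J (r * x))].

Definition left_noetherian : Prop :=
  forall J : nat -> set A, (forall n, left_ideal (J n)) ->
    (forall n, J n `<=` J n.+1) ->
    exists N : nat, forall n, (N <= n)%N -> J n = J N.

End NormedRing.

Definition topological_module (A : pzRingType) (nr : A -> real)
    (M : lmodType A) (op : set (set M)) : Prop :=
  [/\ is_topology op,
      (forall (x y : M) W, op W -> W (x + y) ->
         exists U V, [/\ op U, op V, U x, V y &
                      forall x' y', U x' -> V y' -> W (x' + y')]),
      (forall (x : M) W, op W -> W (- x) ->
         exists U, [/\ op U, U x & forall x', U x' -> W (- x')]) &
      (forall (r : A) (x : M) W, op W -> W (r *: x) ->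
         exists U V, [/\ norm_open nr U, op V, U r, V x &
                      forall r' x', U r' -> V x' -> W (r' *: x')])].

Definition polish_module (A : pzRingType) (nr : A -> real)
    (M : lmodType A) (op : set (set M)) : Prop :=
  topological_module nr op /\ polish op.

Definition in_l1 (S : pzRingType) (nS : S -> real) (a : nat -> S) : Prop :=
  cvgn (series (fun k => nS (a k) / (k`!)%:R)).

Definition l1_dist (S : pzRingType) (nS : S -> real) (a b : nat -> S) : real :=
  limn (series (fun k => nS (a k - b k) / (k`!)%:R)).

Definition quotient_norm (A : pzRingType) (nr : A -> real) (S : pzRingType)
    (pi : A -> S) (nS : S -> real) : Prop :=
  forall r : A,
    (exists s, pi s = pi r /\ nS (pi r) = nr s) /\
    (forall s, pi s = pi r -> nS (pi r) <= nr s).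

(* f restricted to l^1(S) is a continuous R-linear injection l^1(S) -> M,
   where R acts on l^1(S) through pi: r.(s_k) = (pi r * s_k). *)
Definition l1_embedding (A : pzRingType) (M : lmodType A) (op : set (set M))
    (S : pzRingType) (pi : A -> S) (nS : S -> real) (f : (nat -> S) -> M) : Prop :=
  [/\ (forall a b, in_l1 nS a -> in_l1 nS b -> f (fun k => a k + b k) = f a + f b),
      (forall (r : A) a, in_l1 nS a -> f (fun k => pi r * a k) = r *: f a),
      (forall a b, in_l1 nS a -> in_l1 nS b -> f a = f b -> a = b) &
      (forall a W, in_l1 nS a -> op W -> W (f a) ->
         exists2 e : real, 0 < e &
           forall b, in_l1 nS b -> l1_dist nS a b < e -> W (f b))].

(* l^1(S) [=^R M for some nonzero quotient ring S = R/I (I proper two-sided,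
   namely I = ker pi) with the quotient norm *)
Definition l1_quotient_embeds (A : pzRingType) (nr : A -> real)
    (M : lmodType A) (op : set (set M)) : Prop :=
  exists (S : nzRingType) (pi : {rmorphism A -> S}) (nS : S -> real)
         (f : (nat -> S) -> M),
    [/\ (forall s : S, exists r : A, pi r = s),
        quotient_norm nr pi nS &
        l1_embedding op pi nS f].

Definition exactly_one (P Q : Prop) : Prop := (P \/ Q) /\ ~ (P /\ Q).

(* The two alternatives exclude each other by a cardinality argument: l^1(S)
   contains all 0/1-sequences, of which there are uncountably many.

   Assume now M uncountable and fix a complete metric d inducing its topology.
   - Noetherianity provides a two-sided ideal I that is maximal among the
     ideals whose annihilator N = Ann_M(I) is uncountable.
   - N is a closed submodule, and maximality of I shows that for r outside I
     the zero set of w |-> p + r w is nowhere dense in N.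
   - A discrete proper norm has finite balls, so R is countable.  Baire's
     theorem in N then gives x_0, x_1, ... in N such that adding c_n x_n to a
     partial sum sum_{i<n} c_i x_i with |c_i| <= (n+1) i! moves it by less
     than 2^-(n+1), while partial sums with a coefficient outside I stay
     uniformly away from 0.
   - Hence for S = R/I with the quotient norm, a |-> sum_k rep(a_k) x_k,
     where rep picks a representative of minimal norm, is a well-defined
     continuous R-linear injection l^1(S) -> M. *)

From HB Require Import structures.
From mathcomp Require Import all_boot all_order all_algebra.
From mathcomp Require Import all_classical all_reals all_analysis.
From mathcomp Require Import Rstruct Rstruct_topology.
From mathcomp Require Import generic_quotient ring_quotient.
From mathcomp Require Import lra.

Set Implicit Arguments.
Unset Strict Implicit.
Unset Printing Implicit Defensive.
Import Order.TTheory GRing.Theory Num.Theory.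
Local Open Scope classical_set_scope.
Local Open Scope ring_scope.

Lemma half_pow (eta : real) k : eta / 2 ^+ k.+1 = eta / 2 ^+ k / 2.
Proof. by rewrite exprSr invfM mulrA. Qed.

Lemma pow_small (eta e : real) : 0 <= eta -> 0 < e -> exists n : nat, eta / 2 ^+ n < e.
Proof.
move=> eta_ge0 e_gt0.
have [n hn] : exists n : nat, eta / e < n%:R.
  exists (Num.Def.archi_bound (eta / e)).
  by apply: archi_boundP; apply: divr_ge0 => //; exact: ltW.
exists n.
have pow_gt0 : (0 : real) < 2 ^+ n by apply: exprn_gt0.
rewrite ltr_pdivrMr // in hn; rewrite ltr_pdivrMr //.
have n_le_pow : (n%:R : real) <= 2 ^+ n.
  by rewrite -natrX ler_nat; apply: ltnW; exact: ltn_expl.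
have : e * n%:R <= e * 2 ^+ n by rewrite ler_wpM2l // ltW.
move: (2 ^+ n : real) (n%:R : real) hn => a b; lra.
Qed.

Lemma pow_mono (eta : real) i j : 0 <= eta -> (i <= j)%N -> eta / 2 ^+ j <= eta / 2 ^+ i.
Proof.
move=> eta_ge0 ij; apply: ler_wpM2l => //.
by rewrite lef_pV2 ?posrE ?exprn_gt0 // ler_eXn2l // ltr1n.
Qed.

Lemma pow_lt (a : real) n : 0 < a -> a / 2 ^+ n.+1 < a.
Proof.
move=> a_gt0; rewrite ltr_pdivrMr ?exprn_gt0 //.
have : (1 : real) < 2 ^+ n.+1 by rewrite exprn_egt1 // ltr1n.
move: (2 ^+ n.+1 : real) => z; nra.
Qed.

Lemma inv_small (del : real) : 0 < del -> exists n : nat, (n.+1%:R)^-1 < del.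
Proof.
move=> del_gt0; exists (Num.Def.archi_bound (del^-1)).
have inv_gt0 : 0 < del^-1 by rewrite invr_gt0.
have h := archi_boundP (ltW inv_gt0).
set n := Num.Def.archi_bound _ in h *.
have hn : del^-1 < n.+1%:R by apply: (lt_trans h); rewrite ltr_nat.
by rewrite -(invrK del) ltf_pV2 ?posrE ?invr_gt0.
Qed.

Lemma term_le_series (u : nat -> real) : (forall k, 0 <= u k) -> cvgn (series u) ->
  forall k, u k <= limn (series u).
Proof.
move=> u_ge0 u_cvg k.
have u_mono : {homo series u : n m / (n <= m)%N >-> n <= m}.
  by move=> n m nm; apply: (@nondecreasing_series _ u xpredT 0%N) => // i _ _; exact: u_ge0.
apply: le_trans (nondecreasing_cvgn_le u_mono u_cvg k.+1).
by rewrite seriesSr lerDr /series /=; apply: sumr_ge0 => i _; exact: u_ge0.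
Qed.

Lemma dependent_choice (T : Type) (t0 : T) (P : nat -> (nat -> T) -> T -> Prop) :
  (forall n X Y t, (forall i, (i < n)%N -> X i = Y i) -> P n X t -> P n Y t) ->
  (forall n X, (forall i, (i < n)%N -> P i X (X i)) -> exists t, P n X t) ->
  exists X, forall n, P n X (X n).
Proof.
move=> P_local P_step.
have step : forall nX : nat * (nat -> T), exists t,
    (forall i, (i < nX.1)%N -> P i nX.2 (nX.2 i)) -> P nX.1 nX.2 t.
  move=> [n X] /=; case: (pselect (forall i, (i < n)%N -> P i X (X i))) => [h|nh].
  - by have [t ht] := P_step n X h; exists t.
  - by exists t0 => h; exfalso; apply: nh.
have [g hg] := choice step.
pose F := fix F n := if n is n'.+1 then (fun i => if i == n' then g (n', F n') else F n' i)
  else (fun _ => t0).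
pose X i := F i.+1 i.
have X_eq n : X n = g (n, F n) by rewrite /X /= eqxx.
have F_prefix : forall n i, (i < n)%N -> F n i = X i.
  elim=> [//|n IH] i hi /=.
  case: eqP => [->|ne]; first by rewrite X_eq.
  by apply: IH; rewrite ltn_neqAle -ltnS hi andbT; apply/eqP.
have X_good : forall n i, (i < n)%N -> P i X (X i).
  elim=> [//|n IH] i hi.
  case: (ltnP i n) => [lt_in|le_ni]; first exact: IH.
  have -> : i = n by apply/eqP; rewrite eqn_leq le_ni -ltnS hi.
  have F_good : forall j, (j < n)%N -> P j (F n) (F n j).
    move=> j hj; rewrite F_prefix //; apply: (P_local j X); last exact: IH.
    by move=> k hk; rewrite F_prefix ?(ltn_trans hk hj).
  rewrite X_eq; apply: (P_local n (F n)); [exact: F_prefix | exact: hg (n, F n) F_good].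
by exists X => n; exact: X_good n.+1 n (ltnSn n).
Qed.

(** The quotient ring R/I by a proper two-sided ideal. *)

Definition two_sided_ideal (R : pzRingType) (J : set R) : Prop :=
  left_ideal J /\ (forall x r, J x -> J (x * r)).

Record proper_ideal (R : pzRingType) := ProperIdeal {
  iset : set R;
  iset_ideal : two_sided_ideal iset;
  iset_proper : ~ iset 1 }.

Local Open Scope quotient_scope.

Section QuotientRing.
Variables (R : pzRingType) (J : proper_ideal R).
Local Notation I := (iset J).

Lemma iset0 : I 0.
Proof. by case: (iset_ideal J) => -[]. Qed.
Lemma isetB x y : I x -> I y -> I (x - y).
Proof. by case: (iset_ideal J) => -[_ h _] _; exact: h. Qed.
Lemma isetMl r x : I x -> I (r * x).
Proof. by case: (iset_ideal J) => -[_ _ h] _; exact: h. Qed.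
Lemma isetMr x r : I x -> I (x * r).
Proof. by case: (iset_ideal J) => _ h; exact: h. Qed.

(* I as a boolean predicate, the form required by the quotient library *)
Definition ideal_pred : {pred R} := fun x => `[< I x >].

Lemma ideal_predE x : (x \in ideal_pred) = `[< I x >]. Proof. by []. Qed.

Lemma ideal_pred_zmod : zmod_closed ideal_pred.
Proof.
split; first exact/asboolP/iset0.
by move=> x y /asboolP hx /asboolP hy; apply/asboolP; exact: isetB.
Qed.

HB.instance Definition _ := GRing.isZmodClosed.Build R ideal_pred ideal_pred_zmod.

Definition quot_ring := Quotient.quot ideal_pred.
HB.instance Definition _ := GRing.Zmodule.on quot_ring.
HB.instance Definition _ :
  EqQuotient R (Quotient.equiv ideal_pred) quot_ring := EqQuotient.on quot_ring.

Definition qproj (x : R) : quot_ring := \pi_quot_ring x.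
Definition qone : quot_ring := lift_cst quot_ring 1.
Definition qmul := lift_op2 quot_ring *%R.
Canonical qproj_one_morph := PiConst qone.

(* multiplication is well defined on classes because I is two-sided *)
Lemma qproj_mul : {morph \pi_quot_ring : x y / x * y >-> qmul x y}.
Proof.
move=> x y; unlock qmul; apply/eqP; rewrite piE Quotient.equivE.
rewrite -[_ * _](addrNK (x * repr (\pi_quot_ring y))) -mulrBr.
rewrite -addrA -mulrBl rpredD //.
  rewrite ideal_predE; apply/asboolP; apply: isetMl; apply/asboolP.
  by rewrite -ideal_predE Quotient.idealrBE reprK.
rewrite ideal_predE; apply/asboolP; apply: isetMr; apply/asboolP.
by rewrite -ideal_predE Quotient.idealrBE reprK.
Qed.
Canonical qproj_mul_morph := PiMorph2 qproj_mul.

Lemma qmulA : associative qmul.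
Proof. by move=> x y z; rewrite -[x]reprK -[y]reprK -[z]reprK !piE mulrA. Qed.
Lemma qmul1q : left_id qone qmul.
Proof. by move=> x; rewrite -[x]reprK !piE mul1r. Qed.
Lemma qmulq1 : right_id qone qmul.
Proof. by move=> x; rewrite -[x]reprK !piE mulr1. Qed.
Lemma qmulDl : left_distributive qmul +%R.
Proof. by move=> x y z; rewrite -[x]reprK -[y]reprK -[z]reprK !piE mulrDl. Qed.
Lemma qmulDr : right_distributive qmul +%R.
Proof. by move=> x y z; rewrite -[x]reprK -[y]reprK -[z]reprK !piE mulrDr. Qed.
Lemma qone_neq0 : qone != 0.
Proof.
rewrite piE Quotient.equivE subr0 ideal_predE.
by apply/negP => /asboolP; exact: iset_proper.
Qed.

HB.instance Definition _ := GRing.Zmodule_isNzRing.Build quot_ring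
  qmulA qmul1q qmulq1 qmulDl qmulDr qone_neq0.

Lemma qproj_zmod : zmod_morphism qproj.
Proof. by move=> x y; rewrite /qproj !piE. Qed.
Lemma qproj_monoid : monoid_morphism qproj.
Proof. by split; move=> *; rewrite /qproj !piE. Qed.
HB.instance Definition _ := GRing.isZmodMorphism.Build R quot_ring qproj qproj_zmod.
HB.instance Definition _ := GRing.isMonoidMorphism.Build R quot_ring qproj qproj_monoid.

Lemma qproj_surj (s : quot_ring) : exists r, qproj r = s.
Proof. by exists (repr s); rewrite /qproj reprK. Qed.

Lemma qproj_eq u v : qproj u = qproj v <-> I (u - v).
Proof.
split; first by move=> /eqP; rewrite /qproj -Quotient.idealrBE ideal_predE => /asboolP.
by move=> h; apply/eqP; rewrite /qproj -Quotient.idealrBE ideal_predE; apply/asboolP.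
Qed.

End QuotientRing.

Local Close Scope quotient_scope.

(** Metric spaces: limits, telescoping sums and Baire's theorem. *)

Section MetricSpace.
Variables (T : Type) (d : T -> T -> real).
Hypothesis d_metric : is_metric d.

Lemma dist_ge0 x y : 0 <= d x y. Proof. by case: d_metric. Qed.
Lemma dist_xx x : d x x = 0.
Proof. by case: d_metric => _ h _ _; exact: (proj2 (h x x) erefl). Qed.
Lemma dist_eq0 x y : d x y = 0 -> x = y.
Proof. by case: d_metric => _ h _ _; exact: (proj1 (h x y)). Qed.
Lemma distC x y : d x y = d y x. Proof. by case: d_metric. Qed.
Lemma dist_triangle x y z : d x z <= d x y + d y z. Proof. by case: d_metric. Qed.

Lemma limit_dist_le (u : nat -> T) z y (b : real) m :
  metric_converges d u z -> (forall n, (m <= n)%N -> d y (u n) <= b) -> d y z <= b.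
Proof.
move=> u_cvg u_le; apply/ler_addgt0Pr => e e_gt0.
have [n hn] := u_cvg e e_gt0.
have := dist_triangle y (u (maxn m n)) z.
have := u_le (maxn m n) (leq_maxl _ _).
have := hn (maxn m n) (leq_maxr _ _).
lra.
Qed.

Lemma limit_unique (u : nat -> T) L1 L2 :
  metric_converges d u L1 -> metric_converges d u L2 -> L1 = L2.
Proof.
move=> h1 h2; apply: dist_eq0; apply/eqP; rewrite eq_le dist_ge0 andbT.
apply/ler_addgt0Pr => e e_gt0; rewrite add0r.
have [n1 hn1] := h1 (e / 2) (ltac:(lra)).
have [n2 hn2] := h2 (e / 2) (ltac:(lra)).
have := dist_triangle L1 (u (maxn n1 n2)) L2.
have := hn1 _ (leq_maxl n1 n2); have := hn2 _ (leq_maxr n1 n2).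
rewrite (distC L1 (u (maxn n1 n2))); lra.
Qed.

Definition metric_closed (N : set T) : Prop := forall y,
  (forall del : real, 0 < del -> exists w, N w /\ d y w < del) -> N y.

(* F is nowhere dense in N: every ball of N contains a closed ball of N
   missing F *)
Definition avoidable (N F : set T) : Prop := forall z rho, N z -> 0 < rho ->
  exists y rho', [/\ N y, d z y < rho, 0 < rho' & forall w, N w -> d y w < rho' -> ~ F w].

Lemma avoidable_disjoint (N F : set T) : (forall w, N w -> ~ F w) -> avoidable N F.
Proof.
move=> NF z rho Nz rho_gt0; exists z, 1; split => //; first by rewrite dist_xx.
by move=> w Nw _; exact: NF.
Qed.

Lemma avoidable_sub (N F G : set T) : avoidable N F -> G `<=` F -> avoidable N G.
Proof.
move=> hF GF z rho Nz rho_gt0; have [y [rho' [Ny dy rho'_gt0 hy]]] := hF z rho Nz rho_gt0.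
by exists y, rho'; split => // w Nw dw /GF; exact: hy.
Qed.

Lemma avoid_half (N F : set T) y rho : avoidable N F -> N y -> 0 < rho ->
  exists y' rho', [/\ N y', d y y' <= rho / 2, 0 < rho', rho' <= rho / 2 &
                    forall w, N w -> d y' w <= rho' -> ~ F w].
Proof.
move=> hF Ny rho_gt0.
have [y' [rho' [Ny' dy rho'_gt0 hy']]] := hF y (rho / 2) Ny (ltac:(lra)).
have min_gt0 : 0 < Num.min rho' rho by rewrite lt_min rho_gt0 rho'_gt0.
have min_le' : Num.min rho' rho <= rho' by rewrite ge_min lexx.
have min_le : Num.min rho' rho <= rho by rewrite ge_min lexx orbT.
exists y', (Num.min rho' rho / 2); split.
- exact: Ny'.
- lra.
- lra.
- lra.
- by move=> w Nw hw; apply: hy' => //; lra.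
Qed.

Hypothesis d_complete : metric_complete d.

Lemma telescoping_limit (u : nat -> T) (e : nat -> real) m :
  (forall k, 0 <= e k) ->
  (forall eps, 0 < eps -> exists2 k, (m <= k)%N & e k < eps) ->
  (forall k, (m <= k)%N -> d (u k) (u k.+1) <= e k - e k.+1) ->
  exists L, metric_converges d u L /\ forall i, (m <= i)%N -> d (u i) L <= e i.
Proof.
move=> e_ge0 e_small step.
have chain : forall i j, (m <= i)%N -> d (u i) (u (i + j)%N) <= e i - e (i + j)%N.
  move=> i; elim=> [|j IH] hi; first by rewrite addn0 dist_xx subrr.
  have := dist_triangle (u i) (u (i + j)%N) (u (i + j).+1).
  have := step (i + j)%N (leq_trans hi (leq_addr _ _)).
  have := IH hi; rewrite addnS; lra.
have bound : forall i j, (m <= i)%N -> d (u i) (u (i + j)%N) <= e i.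
  by move=> i j hi; have := chain i j hi; have := e_ge0 (i + j)%N; lra.
have cauchy : metric_cauchy d u.
  move=> eps eps_gt0; have [k km hk] := e_small (eps / 2) (ltac:(lra)).
  exists k => p q hp hq.
  have h1 := bound k (p - k)%N km; rewrite subnKC // in h1.
  have h2 := bound k (q - k)%N km; rewrite subnKC // in h2.
  have := dist_triangle (u p) (u k) (u q); rewrite (distC (u p) (u k)); lra.
have [L hL] := d_complete cauchy.
exists L; split => // i hi; apply: (limit_dist_le (m := i) hL) => n hn.
by have := bound i (n - i)%N hi; rewrite subnKC.
Qed.

Lemma geometric_limit (u : nat -> T) m (eta : real) : 0 <= eta ->
  (forall k, (m <= k)%N -> d (u k) (u k.+1) <= eta / 2 ^+ k.+1) ->
  exists L, metric_converges d u L /\ (forall i, (m <= i)%N -> d (u i) L <= eta / 2 ^+ i).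
Proof.
move=> eta_ge0 step; apply: telescoping_limit => [k|eps eps_gt0|k hk].
- by apply: divr_ge0 => //; exact: exprn_ge0.
- have [n hn] := pow_small eta_ge0 eps_gt0.
  exists (maxn m n); first exact: leq_maxl.
  exact: le_lt_trans (pow_mono eta_ge0 (leq_maxr m n)) hn.
- have := step k hk; rewrite half_pow; move: (eta / 2 ^+ k) => a; lra.
Qed.

Lemma baire (N : set T) (F : nat -> set T) : metric_closed N ->
  (forall i, avoidable N (F i)) ->
  forall y0 rho0, N y0 -> 0 < rho0 -> exists z, [/\ N z, d y0 z < rho0 & forall i, ~ F i z].
Proof.
move=> N_closed F_avoid y0 rho0 Ny0 rho0_gt0.
have step : forall it : nat * (T * real), exists u : T * real,
    N it.2.1 -> 0 < it.2.2 -> [/\ N u.1, d it.2.1 u.1 <= it.2.2 / 2, 0 < u.2,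
      u.2 <= it.2.2 / 2 & forall w, N w -> d u.1 w <= u.2 -> ~ F it.1 w].
  move=> [i [y rho]] /=.
  case: (pselect (N y /\ 0 < rho)) => [[Ny rho_gt0]|nok].
  - by have [y' [rho' h]] := avoid_half (F_avoid i) Ny rho_gt0; exists (y', rho').
  - by exists (y, rho) => Ny rho_gt0; exfalso; apply: nok.
have [g hg] := choice step.
pose s := fix s n := if n is n'.+1 then g (n', s n') else (y0, rho0 / 2).
have inv : forall n, N (s n).1 /\ 0 < (s n).2.
  elim=> [|n [h1 h2]] /=; first by split => //; lra.
  by have [] := hg (n, s n) h1 h2.
have hs : forall n, [/\ d (s n).1 (s n.+1).1 <= (s n).2 / 2, (s n.+1).2 <= (s n).2 / 2 &
    forall w, N w -> d (s n.+1).1 w <= (s n.+1).2 -> ~ F n w].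
  by move=> n; have [_ ? _ ? ?] := hg (n, s n) (inv n).1 (inv n).2.
have decay : forall n, (s n).2 <= rho0 / 2 ^+ n.
  elim=> [|n IH]; first by rewrite expr0 divr1 /=; lra.
  have [_ h _] := hs n; rewrite half_pow; move: (rho0 / 2 ^+ n) IH => a; lra.
have shrink : forall n, (0 <= n)%N -> d (s n).1 (s n.+1).1 <= (s n).2 - (s n.+1).2.
  by move=> n _; have [h1 h2 _] := hs n; lra.
have small : forall eps, 0 < eps -> exists2 n, (0 <= n)%N & (s n).2 < eps.
  move=> eps eps_gt0; have [n hn] := pow_small (ltW rho0_gt0) eps_gt0.
  by exists n => //; exact: le_lt_trans (decay n) hn.
have [z [hz hzb]] := telescoping_limit (fun n => ltW (inv n).2) small shrink.
have Nz : N z.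
  apply: N_closed => del del_gt0; have [n hn] := hz del del_gt0.
  by exists (s n).1; split; [exact: (inv n).1 | rewrite distC; exact: hn].
exists z; split => //.
- by have /= := hzb 0%N (leq0n _); lra.
- by move=> i; have [_ _ h] := hs i; exact: h Nz (hzb i.+1 (leq0n _)).
Qed.

End MetricSpace.

Section MetricModule.
Variables (R : pzRingType) (nr : R -> real) (M : lmodType R) (op : set (set M)).
Variable d : M -> M -> real.
Hypothesis d_metric : is_metric d.
Hypothesis op_metric : forall U, op U <-> metric_open d U.
Hypothesis M_top : topological_module nr op.

Lemma ball_open x e : op [set y | d x y < e].
Proof.
apply/op_metric => y /= hy; exists (e - d x y); first by rewrite subr_gt0.
move=> z hz; apply: (le_lt_trans (dist_triangle d_metric x y z)); by rewrite -ltrBrDl.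
Qed.

Lemma open_ball U x : op U -> U x -> exists2 e : real, 0 < e & forall y, d x y < e -> U y.
Proof. by move=> /op_metric h /h. Qed.

Lemma affine_continuous (p : M) (r : R) (y : M) (e : real) : 0 < e ->
  exists2 del : real, 0 < del & forall w, d y w < del -> d (p + r *: y) (p + r *: w) < e.
Proof.
move=> e_gt0; case: M_top => _ hadd _ hscale.
have [U [V [oU oV Up Vry hUV]]] := hadd p (r *: y) _ (ball_open (p + r *: y) e)
  (ltac:(by rewrite /= dist_xx)).
have [eta eta_gt0 heta] := open_ball oV Vry.
have [U' [V' [oU' oV' U'r V'y hUV']]] := hscale r y _ (ball_open (r *: y) eta)
  (ltac:(by rewrite /= dist_xx)).
have [del del_gt0 hdel] := open_ball oV' V'y.
exists del => // w /hdel V'w.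
exact: (hUV _ _ Up (heta _ (hUV' _ _ U'r V'w))).
Qed.

Lemma affine_zero_closed (p : M) (r : R) (y : M) :
  (forall del : real, 0 < del -> exists w, d y w < del /\ p + r *: w = 0) ->
  p + r *: y = 0.
Proof.
move=> h; apply: contrapT => hne.
have e_gt0 : 0 < d 0 (p + r *: y).
  rewrite lt0r dist_ge0 // andbT; apply/eqP => /(dist_eq0 d_metric) h0.
  by apply: hne; rewrite -h0.
have [del del_gt0 hdel] := affine_continuous p r y e_gt0.
have [w [hw hw0]] := h _ del_gt0.
by have := hdel _ hw; rewrite hw0 distC // ltxx.
Qed.

Lemma open_translate (W : set M) x : op W -> W x ->
  exists2 rho : real, 0 < rho & forall u, d 0 u < rho -> W (x + u).
Proof.
move=> oW Wx; have [eta eta_gt0 heta] := open_ball oW Wx.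
have [del del_gt0 hdel] := affine_continuous x 1 0 eta_gt0.
exists del => // u /hdel; rewrite scaler0 addr0 scale1r; exact: heta.
Qed.

Lemma add_continuous a b (e : real) : 0 < e -> exists2 del : real, 0 < del &
  forall a' b', d a a' < del -> d b b' < del -> d (a + b) (a' + b') < e.
Proof.
move=> e_gt0; case: M_top => _ hadd _ _.
have hab : [set z | d (a + b) z < e] (a + b) by rewrite /= dist_xx.
have [U [V [oU oV Ua Vb h]]] := hadd a b _ (ball_open (a + b) e) hab.
have [d1 d1_gt0 h1] := open_ball oU Ua.
have [d2 d2_gt0 h2] := open_ball oV Vb.
exists (Num.min d1 d2); first by rewrite lt_min d1_gt0 d2_gt0.
move=> a' b' ha hb; apply: h; [apply: h1 | apply: h2]; apply: lt_le_trans; eauto;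
  by rewrite ge_min lexx ?orbT.
Qed.

Lemma limit_add (u v : nat -> M) L1 L2 :
  metric_converges d u L1 -> metric_converges d v L2 ->
  metric_converges d (fun n => u n + v n) (L1 + L2).
Proof.
move=> h1 h2 e e_gt0; have [del del_gt0 hdel] := add_continuous L1 L2 e_gt0.
have [n1 hn1] := h1 del del_gt0; have [n2 hn2] := h2 del del_gt0.
exists (maxn n1 n2) => n hn; rewrite distC //; apply: hdel; rewrite distC //.
  by apply: hn1; apply: leq_trans hn; exact: leq_maxl.
by apply: hn2; apply: leq_trans hn; exact: leq_maxr.
Qed.

Lemma limit_scale (u : nat -> M) L r : metric_converges d u L ->
  metric_converges d (fun n => r *: u n) (r *: L).
Proof.
move=> h e e_gt0; have [del del_gt0 hdel] := affine_continuous 0 r L e_gt0.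
have [n hn] := h del del_gt0; exists n => k hk; rewrite distC //.
by have := hdel (u k); rewrite !add0r; apply; rewrite distC //; exact: hn.
Qed.

Lemma finite_affine_continuous (L : seq (M * R)) (e : real) : 0 < e ->
  exists2 rho : real, 0 < rho & forall x, d 0 x < rho ->
    forall q, q \in L -> d q.1 (q.1 + q.2 *: x) < e.
Proof.
move=> e_gt0; elim: L => [|q L [rho rho_gt0 hrho]].
  by exists 1 => // x _ q; rewrite in_nil.
have [del del_gt0 hdel] := affine_continuous q.1 q.2 0 e_gt0.
exists (Num.min rho del); first by rewrite lt_min rho_gt0 del_gt0.
move=> x hx q'; rewrite in_cons => /orP [/eqP ->|hq].
- have := hdel x; rewrite scaler0 addr0; apply; apply: lt_le_trans hx _.
  by rewrite ge_min lexx orbT.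
- by apply: hrho hq; apply: lt_le_trans hx _; rewrite ge_min lexx.
Qed.

Lemma finite_min_dist (W : seq M) : exists2 del : real, 0 < del &
  forall w, w \in W -> w <> 0 -> del <= d 0 w.
Proof.
elim: W => [|a W [del del_gt0 hdel]]; first by exists 1 => // w; rewrite in_nil.
case: (pselect (a = 0)) => [a0|a_neq0].
  by exists del => // w; rewrite in_cons => /orP [/eqP -> //|]; exact: hdel.
have da_gt0 : 0 < d 0 a.
  rewrite lt0r dist_ge0 // andbT; apply/eqP => /(dist_eq0 d_metric) h.
  by apply: a_neq0.
exists (Num.min del (d 0 a)); first by rewrite lt_min del_gt0 da_gt0.
move=> w; rewrite in_cons => /orP [/eqP ->|hw] w_neq0; first by rewrite ge_min lexx orbT.
by rewrite ge_min hdel.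
Qed.

End MetricModule.

Lemma seq_argmin (T : eqType) (f : T -> real) (P : T -> Prop) (L : seq T) r0 :
  r0 \in L -> P r0 ->
  exists r, [/\ r \in L, P r & forall r', r' \in L -> P r' -> f r <= f r'].
Proof.
elim: L r0 => [//|a L IH] r0.
case: (pselect (exists2 r', r' \in L & P r')) => [[r' r'L Pr'] _ _|noL].
  have [m [mL Pm hm]] := IH r' r'L Pr'.
  case: (pselect (P a /\ f a <= f m)) => [[Pa am]|nam].
    exists a; split => //; first exact: mem_head.
    move=> r''; rewrite in_cons => /orP [/eqP -> //|hr] Pr; exact: le_trans am (hm _ hr Pr).
  exists m; split => //; first by rewrite in_cons mL orbT.
  move=> r''; rewrite in_cons => /orP [/eqP ->|hr] Pr; last exact: hm.
  by case: (leP (f m) (f a)) => // /ltW h; exfalso; apply: nam.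
rewrite in_cons => /orP [/eqP ->|hr0] Pr0; last by exfalso; apply: noL; exists r0.
exists a; split => //; first exact: mem_head.
by move=> r''; rewrite in_cons => /orP [/eqP -> //|hr] Pr; exfalso; apply: noL; exists r''.
Qed.

Section NormedRing.
Variables (R : pzRingType) (nr : R -> real).
Hypothesis nr_norm : is_ring_norm nr.
Hypothesis nr_disc : discrete_norm nr.
Hypothesis nr_proper : proper_norm nr.

Lemma nr_ge0 x : 0 <= nr x.
Proof. by case: nr_norm => [[h _ _ _] _]; have := h x 0; rewrite subr0. Qed.
Lemma nrN x : nr (- x) = nr x.
Proof. by case: nr_norm => [[_ _ h _] _]; have := h 0 x; rewrite sub0r subr0. Qed.
Lemma nrD x y : nr (x + y) <= nr x + nr y.
Proof. by case: nr_norm => [[_ _ _ h] _]; have := h x 0 (- y); rewrite !opprK subr0 add0r. Qed.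

Lemma discrete_threshold : exists2 th : real, 0 < th & forall r, nr r < th -> r = 0.
Proof.
have [th th_gt0 hth] := @nr_disc [set 0] 0 erefl.
by exists th => // r hr; apply: hth; rewrite sub0r nrN.
Qed.

Lemma finite_ball (c : real) : exists L : seq R, forall r, nr r <= c -> r \in L.
Proof.
have := @nr_proper 0 c; rewrite /compact_in => h.
have [n [G [hG hK]]] := h [set A | exists y, A = [set y]]
  (fun A _ => @nr_disc A) (fun r hr => ex_intro2 _ _ [set r] (ex_intro _ r erefl) erefl).
pose pick i := if pselect (exists y, G i = [set y]) is left e then projT1 (cid e) else 0.
exists [seq pick i | i <- iota 0 n] => r hr.
have [i hi Gir] := hK r (ltac:(by rewrite /= sub0r nrN)).
have [FGi _] := hG i hi.
apply/mapP; exists i; first by rewrite mem_iota add0n.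
rewrite /pick; case: pselect => [e|]; last by move=> nh; exfalso; apply: nh.
have := projT2 (cid e); set y := projT1 _ => hy.
by move: Gir; rewrite hy.
Qed.

Lemma ring_enum : exists e : nat -> R, forall r, exists k, e k = r.
Proof.
have [L hL] := choice (fun n : nat => finite_ball n%:R).
pose e k := if (@unpickle (nat * nat)%type k) is Some p then nth 0 (L p.1) p.2 else 0.
exists e => r.
have [n hn] : exists n : nat, nr r <= n%:R.
  by exists (Num.Def.archi_bound (nr r)); apply/ltW/archi_boundP/nr_ge0.
exists (pickle (n, index r (L n))); rewrite /e pickleK /=.
by apply: nth_index; apply: hL.
Qed.

End NormedRing.

(** Annihilators and a maximal ideal with uncountable annihilator. *)

Definition annihilator (R : pzRingType) (M : lmodType R) (J : set R) : set M :=
  [set x | forall t, J t -> t *: x = 0].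
Arguments annihilator {R} M J.

Section MaximalIdeal.
Variables (R : pzRingType) (M : lmodType R).

Lemma two_sided_ideal0 : two_sided_ideal [set (0 : R)].
Proof.
split; first split => //.
- by move=> x y -> ->; rewrite subr0.
- by move=> r x ->; rewrite mulr0.
- by move=> x r ->; rewrite mul0r.
Qed.

Lemma uncountable_annihilator_proper (J : set R) :
  ~ countable (annihilator M J) -> ~ J 1.
Proof.
move=> J_uncount J1; apply: J_uncount; apply: (@sub_countable _ _ _ [set (0 : M)]).
  by apply: subset_card_le => y hy; have := hy 1 J1; rewrite scale1r => ->.
exact: countable1.
Qed.

Hypothesis noeth : left_noetherian R.
Hypothesis M_uncount : ~ countable [set: M].

(* otherwise an increasing chain of such ideals would never stabilize *)
Lemma maximal_annihilator_ideal : exists I : set R,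
  [/\ two_sided_ideal I, ~ countable (annihilator M I) &
      forall J, two_sided_ideal J -> ~ countable (annihilator M J) -> I `<=` J -> J `<=` I].
Proof.
apply: contrapT => no_max.
have step : forall J : set R, exists J' : set R,
    two_sided_ideal J -> ~ countable (annihilator M J) ->
    [/\ two_sided_ideal J', ~ countable (annihilator M J'), J `<=` J' & ~ J' `<=` J].
  move=> J; case: (pselect (two_sided_ideal J /\ ~ countable (annihilator M J)))
    => [[h1 h2]|h]; last by exists J => a b; exfalso; apply: h.
  apply: contrapT => hne; apply: no_max; exists J; split => // J' t' u' s'.
  by apply: contrapT => ns; apply: hne; exists J' => _ _; split.
have [g hg] := choice step.
pose C := fix C n := if n is n'.+1 then g (C n') else [set (0 : R)].
have hC : forall n, two_sided_ideal (C n) /\ ~ countable (annihilator M (C n)).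
  elim=> [|n [h1 h2]]; last by have [] := hg (C n) h1 h2.
  split; first exact: two_sided_ideal0.
  move=> hc; apply: M_uncount; apply: sub_countable hc; apply: subset_card_le.
  by move=> x _ t /= ->; rewrite scale0r.
have [N0 hN0] := @noeth C (fun n => (hC n).1.1)
  (fun n => let: conj h1 h2 := hC n in (let: And4 _ _ h _ := hg (C n) h1 h2 in h)).
have := hN0 N0.+1 (leqnSn _) => /= e.
have [h1 h2] := hC N0; have [_ _ _ h] := hg (C N0) h1 h2.
by apply: h; rewrite e.
Qed.

End MaximalIdeal.

Definition lincomb (R : pzRingType) (M : lmodType R) (c : nat -> R) (X : nat -> M)
    (n : nat) : M :=
  \sum_(i < n) c i *: X i.

Lemma lincombS (R : pzRingType) (M : lmodType R) c (X : nat -> M) n :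
  lincomb c X n.+1 = lincomb c X n + c n *: X n.
Proof. by rewrite /lincomb big_ord_recr. Qed.

Lemma lincomb_local (R : pzRingType) (M : lmodType R) c (X Y : nat -> M) n :
  (forall i, (i < n)%N -> X i = Y i) -> lincomb c X n = lincomb c Y n.
Proof. by move=> h; apply: eq_bigr => i _; rewrite h. Qed.

Definition coef_bound (R : pzRingType) (nr : R -> real) (c : nat -> R) (b n : nat) : Prop :=
  forall i, (i <= n)%N -> nr (c i) <= b%:R * (i`!)%:R.

Fixpoint min_prefix (D : nat -> real) n : real :=
  if n is n'.+1 then Num.min (min_prefix D n') (D n') else 1.

(* the admissible size of the n-th step, given the separation radii D *)
Definition step_bound (D : nat -> real) n : real := min_prefix D n / 2 ^+ n.+1.

Lemma min_prefix_gt0 D n : (forall i, (i < n)%N -> 0 < D i) -> 0 < min_prefix D n.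
Proof.
elim: n => [//|n IH] hD /=.
by rewrite lt_min IH ?hD // => i hi; apply: hD; exact: ltnW.
Qed.

Lemma min_prefix_le1 D n : min_prefix D n <= 1.
Proof. by elim: n => [//|n IH] /=; rewrite ge_min IH. Qed.

Lemma min_prefix_le D n i : (i < n)%N -> min_prefix D n <= D i.
Proof.
elim: n => [//|n IH] hi /=; rewrite ge_min.
case: (ltnP i n) => h; first by rewrite IH.
have -> : i = n by apply/eqP; rewrite eqn_leq h -ltnS hi.
by rewrite lexx orbT.
Qed.

Lemma min_prefix_local D D' n :
  (forall i, (i < n)%N -> D i = D' i) -> min_prefix D n = min_prefix D' n.
Proof.
elim: n => [//|n IH] h /=.
by rewrite IH ?h // => i hi; apply: h; exact: ltnW.
Qed.

Section MaximalAnnihilator.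
Variables (R : pzRingType) (nr : R -> real) (M : lmodType R) (op : set (set M)).
Variable d : M -> M -> real.
Hypothesis d_metric : is_metric d.
Hypothesis op_metric : forall U, op U <-> metric_open d U.
Hypothesis M_top : topological_module nr op.
Hypothesis d_complete : metric_complete d.
Hypothesis noeth : left_noetherian R.
Hypothesis nr_norm : is_ring_norm nr.
Hypothesis nr_disc : discrete_norm nr.
Hypothesis nr_proper : proper_norm nr.
Variable D : set M.
Hypothesis D_count : countable D.
Hypothesis D_dense : forall U, op U -> U !=set0 -> (U `&` D) !=set0.
Variable I : set R.
Hypothesis I_ideal : two_sided_ideal I.
Hypothesis I_uncount : ~ countable (annihilator M I).
Hypothesis I_max : forall J, two_sided_ideal J -> ~ countable (annihilator M J) ->
  I `<=` J -> J `<=` I.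

Local Notation N := (annihilator M I).

Lemma ann0 : N 0. Proof. by move=> t _; rewrite scaler0. Qed.
Lemma annD x y : N x -> N y -> N (x + y).
Proof. by move=> hx hy t ht; rewrite scalerDr hx // hy // addr0. Qed.
Lemma annZ r x : N x -> N (r *: x).
Proof. by move=> hx t ht; rewrite scalerA; apply: hx; case: I_ideal => _; exact. Qed.
Lemma annB x y : N x -> N y -> N (x - y).
Proof. by move=> hx hy; rewrite -scaleN1r; apply: annD => //; exact: annZ. Qed.

(* N is closed, each t in I acting continuously *)
Lemma ann_closed : metric_closed d N.
Proof.
move=> y hy t It.
have := @affine_zero_closed _ _ _ _ _ d_metric op_metric M_top 0 t y.
rewrite add0r; apply => del del_gt0.
have [w [Nw dw]] := hy del del_gt0.
by exists w; rewrite add0r; split => //; exact: Nw.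
Qed.

(* N is separable, being a subset of the separable space M *)
Lemma ann_separable : exists E : set M, [/\ countable E, E `<=` N &
  forall x, N x -> forall del, 0 < del -> exists2 e, E e & d x e < del].
Proof.
pose near (yq : M * nat) := exists w, N w /\ d yq.1 w < (yq.2.+1%:R)^-1.
pose h (yq : M * nat) : M := if pselect (near yq) is left e then projT1 (cid e) else 0.
have hN : forall yq, N (h yq).
  move=> yq; rewrite /h; case: pselect => [e|_]; last exact: ann0.
  by have [] := projT2 (cid e).
have hd : forall yq, near yq -> d yq.1 (h yq) < (yq.2.+1%:R)^-1.
  by move=> yq ex; rewrite /h; case: pselect => [e|//]; have [] := projT2 (cid e).
exists (h @` (D `*` setT)); split.
- apply: sub_countable (card_image_le _ _) _.
  by apply: countableX => //; exact: countableP.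
- by move=> _ [yq _ <-]; exact: hN.
- move=> x Nx del del_gt0.
  have [q hq] := inv_small (ltac:(lra) : 0 < del / 2).
  have hb : [set y | d x y < (q.+1%:R)^-1] !=set0.
    by exists x => /=; rewrite dist_xx // invr_gt0 ltr0n.
  have [y [/= dxy Dy]] := D_dense (ball_open d_metric op_metric x (q.+1%:R)^-1) hb.
  exists (h (y, q)); first by exists (y, q).
  have hyx : d y x < (q.+1%:R)^-1 by rewrite distC.
  have := hd (y, q) (ex_intro _ x (conj Nx hyx)).
  have := dist_triangle d_metric x y (h (y, q)).
  move: (h (y, q)) => hyq /=.
  by move: hq dxy; move: (q.+1%:R^-1) => t; lra.
Qed.

Lemma ann_countable_of_local (K : set M) (rho : real) : 0 < rho ->
  (forall u, N u -> d 0 u < rho -> K u) -> countable K -> countable N.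
Proof.
move=> rho_gt0 hK K_count.
have [E [E_count EN dE]] := ann_separable.
apply: (@sub_countable _ _ _ ((fun p : M * M => p.1 + p.2) @` (E `*` K))); last first.
  by apply: sub_countable (card_image_le _ _) _; exact: countableX.
apply: subset_card_le => x Nx.
have [del del_gt0 hdel] := affine_continuous d_metric op_metric M_top x (-1) x rho_gt0.
have [e Ee dxe] := dE x Nx del del_gt0.
exists (e, x - e); last by rewrite /= addrC subrK.
split => //=; apply: hK; first by apply: annB => //; exact: EN.
by have := hdel e dxe; rewrite !scaleN1r subrr.
Qed.

Definition local_annihilator (n : nat) : set R :=
  [set t | forall u, N u -> d 0 u < (n.+1%:R)^-1 -> t *: u = 0].

Definition germ_annihilator : set R := [set t | exists n, local_annihilator n t].

Lemma local_annihilator_mono m n : (m <= n)%N ->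
  local_annihilator m `<=` local_annihilator n.
Proof.
move=> mn t ht u Nu du; apply: ht Nu _; apply: lt_le_trans du _.
by rewrite lef_pV2 ?posrE ?ltr0n // ler_nat.
Qed.

Lemma local_annihilator_ideal n : left_ideal (local_annihilator n).
Proof.
split.
- by move=> u _ _; rewrite scale0r.
- by move=> x y hx hy u Nu du; rewrite scalerBl hx // hy // subrr.
- by move=> a x hx u Nu du; rewrite -scalerA hx // scaler0.
Qed.

(* right multiplication uses the continuity of the action *)
Lemma germ_annihilator_ideal : two_sided_ideal germ_annihilator.
Proof.
split; first split.
- by exists 0%N => u _ _; rewrite scale0r.
- move=> x y [a ha] [b hb]; exists (maxn a b).
  have [_ hB _] := local_annihilator_ideal (maxn a b); apply: hB.
    exact: local_annihilator_mono (leq_maxl a b) _ ha.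
  exact: local_annihilator_mono (leq_maxr a b) _ hb.
- by move=> a x [n hn]; exists n; have [_ _ hM] := local_annihilator_ideal n; exact: hM.
- move=> x a [n hn].
  have inv_gt0 : 0 < (n.+1%:R : real)^-1 by rewrite invr_gt0 ltr0n.
  have [del del_gt0 hdel] := affine_continuous d_metric op_metric M_top 0 a 0 inv_gt0.
  have [m hm] := inv_small del_gt0.
  exists m => u Nu du; rewrite -scalerA; apply: hn; first exact: annZ.
  by have := hdel u (lt_trans du hm); rewrite scaler0 !add0r.
Qed.

(* by Noetherianity a single radius works for the whole germ annihilator *)
Lemma germ_annihilator_uniform : exists n0, germ_annihilator `<=` local_annihilator n0.
Proof.
have [n0 hn0] := @noeth local_annihilator local_annihilator_ideal
  (fun n => local_annihilator_mono (leqnSn n)).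
exists n0 => t [n hn]; case: (leqP n n0) => h; first exact: local_annihilator_mono h _ hn.
by rewrite -(hn0 n (ltnW h)).
Qed.

(* by maximality of I *)
Lemma germ_annihilator_sub : germ_annihilator `<=` I.
Proof.
have I_sub : I `<=` germ_annihilator by move=> t It; exists 0%N => u Nu _; exact: Nu t It.
apply: I_max germ_annihilator_ideal _ I_sub => germ_count; apply: I_uncount.
have [n0 hn0] := germ_annihilator_uniform.
have inv_gt0 : 0 < (n0.+1%:R : real)^-1 by rewrite invr_gt0 ltr0n.
apply: (ann_countable_of_local inv_gt0 _ germ_count) => u Nu du t /hn0; exact.
Qed.

Lemma locally_killing_in_ideal r :
  (exists2 rho : real, 0 < rho & forall u, N u -> d 0 u < rho -> r *: u = 0) -> I r.
Proof.
move=> [rho rho_gt0 hr]; apply: germ_annihilator_sub.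
have [n hn] := inv_small rho_gt0.
by exists n => u Nu du; apply: hr Nu (lt_trans du hn).
Qed.

(* for r outside I, the solutions in N of p + r w = 0 are nowhere dense in N:
   otherwise r would kill a neighbourhood of 0 in N *)
Lemma affine_zero_avoidable p r : ~ I r -> avoidable d N [set w | p + r *: w = 0].
Proof.
move=> nIr z rho Nz rho_gt0; apply: contrapT => hno.
have hall : forall y, N y -> d z y < rho -> p + r *: y = 0.
  move=> y Ny dzy; apply: (affine_zero_closed d_metric op_metric M_top) => del del_gt0.
  apply: contrapT => hne; apply: hno; exists y, del; split => // w Nw dw /= e.
  by apply: hne; exists w.
apply: nIr; apply: locally_killing_in_ideal.
have [del del_gt0 hdel] := affine_continuous d_metric op_metric M_top z 1 0 rho_gt0.
exists del => // u Nu du.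
have hz := hall z Nz (ltac:(by rewrite dist_xx)).
have hzu : d z (z + u) < rho by have := hdel u du; rewrite !scale1r addr0.
have := hall (z + u) (annD Nz Nu) hzu.
by rewrite scalerDr addrA hz add0r.
Qed.

Lemma finite_partial_sums (b : nat -> real) (X : nat -> M) n : exists V : seq M,
  forall c, (forall i, (i < n)%N -> nr (c i) <= b i) -> lincomb c X n \in V.
Proof.
elim: n => [|n [V hV]].
  by exists [:: 0] => c _; rewrite /lincomb big_ord0 mem_seq1.
have [L hL] := finite_ball nr_norm nr_disc nr_proper (b n).
exists [seq v + r *: X n | v <- V, r <- L] => c hc.
rewrite lincombS; apply: allpairs_f; last by apply: hL; exact: hc.
by apply: hV => i hi; apply: hc; exact: ltnW.
Qed.

Definition independent n (X : nat -> M) : Prop :=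
  forall c, (exists2 i, (i < n)%N & ~ I (c i)) -> lincomb c X n <> 0.

Lemma independent_extend n X x : independent n X -> N x ->
  (forall c, ~ I (c n) -> lincomb c X n + c n *: x <> 0) ->
  forall c, (exists2 i, (i <= n)%N & ~ I (c i)) -> lincomb c X n + c n *: x <> 0.
Proof.
move=> indep Nx nonzero c [i hi nI].
case: (pselect (I (c n))) => In; last exact: nonzero.
have -> : c n *: x = 0 by exact: Nx.
rewrite addr0; apply: indep; exists i => //.
by rewrite ltn_neqAle hi andbT; apply/eqP => ein; apply: nI; rewrite ein.
Qed.

Definition good_extension n (X : nat -> M) (Dl : nat -> real) (x : M) (del : real) :=
  [/\ N x,
   (forall c, coef_bound nr c n.+1 n ->
      d (lincomb c X n) (lincomb c X n + c n *: x) < step_bound Dl n),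
   (forall c, ~ I (c n) -> lincomb c X n + c n *: x <> 0),
   0 < del &
   (forall c, coef_bound nr c n.+1 n -> (exists2 i, (i <= n)%N & ~ I (c i)) ->
      del <= d 0 (lincomb c X n + c n *: x))].

Lemma good_extension_local n X X' Dl Dl' x del :
  (forall i, (i < n)%N -> X i = X' i /\ Dl i = Dl' i) ->
  good_extension n X Dl x del -> good_extension n X' Dl' x del.
Proof.
move=> h [h1 h2 h3 h4 h5].
have hL : forall c, lincomb c X n = lincomb c X' n.
  by move=> c; apply: lincomb_local => i hi; have [] := h i hi.
have hS : step_bound Dl n = step_bound Dl' n.
  by rewrite /step_bound (@min_prefix_local Dl Dl') // => i hi; have [] := h i hi.
by split => // c; rewrite -hL -?hS; [exact: h2 | exact: h3 | exact: h5].
Qed.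

Lemma goods_independent n X Dl :
  (forall i, (i < n)%N -> good_extension i X Dl (X i) (Dl i)) -> independent n X.
Proof.
elim: n => [|n IH] good; first by move=> c [i].
have [Nx _ nonzero _ _] := good n (ltnSn n).
have indep : independent n X by apply: IH => i hi; apply: good; exact: ltnW.
move=> c [i hi nI]; rewrite lincombS.
exact: (independent_extend indep Nx nonzero) (ex_intro2 _ _ i hi nI).
Qed.

(* the candidates w with p + c w = 0, c outside I, for the countably many
   coefficient tuples, coded through an enumeration e of R *)
Definition bad_set (e : nat -> R) (X : nat -> M) (n j : nat) : set M :=
  [set w | N w /\
    if (unpickle j : option (nat * seq nat)) is Some ks then
      ~ I (e ks.1) /\ lincomb (fun i => e (nth 0%N ks.2 i)) X n + e ks.1 *: w = 0
    else False].

Lemma bad_set_avoidable e X n j : avoidable d N (bad_set e X n j).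
Proof.
case hj: (unpickle j : option (nat * seq nat)) => [ks|]; last first.
  by apply: (avoidable_disjoint d_metric) => w _ [_]; rewrite hj.
case: (pselect (I (e ks.1))) => [Ie|nIe].
  by apply: (avoidable_disjoint d_metric) => w _ [_]; rewrite hj; case.
apply: avoidable_sub (affine_zero_avoidable
  (lincomb (fun i => e (nth 0%N ks.2 i)) X n) nIe) _.
by move=> w [_]; rewrite hj => -[].
Qed.

Lemma bad_set_cover e X n c w : (forall r, exists k, e k = r) ->
  N w -> ~ I (c n) -> lincomb c X n + c n *: w = 0 -> exists j, bad_set e X n j w.
Proof.
move=> e_surj Nw nIc h0; have [ie hie] := choice e_surj.
exists (pickle (ie (c n), [seq ie (c i) | i <- iota 0 n])).
split => //; rewrite pickleK /=; split; first by rewrite hie.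
rewrite hie -[RHS]h0; congr (_ + _); apply: eq_bigr => i _.
by rewrite (nth_map 0%N) ?size_iota // nth_iota // hie.
Qed.

(* the inductive step, by Baire's theorem in N: a point of N close to 0 (small
   steps) outside all the bad sets (independence); as only finitely many
   bounded combinations occur, some del separates them from 0 *)
Lemma good_extension_exists n X Dl : (forall i, (i < n)%N -> 0 < Dl i) ->
  independent n X -> exists x del, good_extension n X Dl x del.
Proof.
move=> Dl_pos indep.
have [e e_surj] := ring_enum nr_norm nr_disc nr_proper.
have [V hV] := finite_partial_sums (fun i => n.+1%:R * (i`!)%:R) X n.
have [Lb hLb] := finite_ball nr_norm nr_disc nr_proper (n.+1%:R * (n`!)%:R).
pose VL := [seq (v, r) | v <- V, r <- Lb].
have VL_mem : forall c, coef_bound nr c n.+1 n -> (lincomb c X n, c n) \in VL.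
  move=> c hc; apply: allpairs_f; last by apply: hLb; exact: hc.
  by apply: hV => i hi; apply: hc; exact: ltnW.
have step_pos : 0 < step_bound Dl n.
  by rewrite /step_bound divr_gt0 ?exprn_gt0 // min_prefix_gt0.
have [rho rho_pos hrho] :=
  finite_affine_continuous d_metric op_metric M_top VL step_pos.
have [x [Nx dx not_bad]] :=
  baire d_metric d_complete ann_closed (bad_set_avoidable e X n) ann0 rho_pos.
have nonzero : forall c, ~ I (c n) -> lincomb c X n + c n *: x <> 0.
  move=> c nIc h0; have [j hj] := bad_set_cover e_surj Nx nIc h0.
  exact: not_bad j hj.
have [del del_pos hdel] :=
  finite_min_dist d_metric [seq q.1 + q.2 *: x | q <- VL].
exists x, del; split => //.
- by move=> c hc; exact: hrho x dx _ (VL_mem c hc).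
- move=> c hc hex; apply: hdel; first exact: (map_f _ (VL_mem c hc)).
  exact: independent_extend indep Nx nonzero c hex.
Qed.

Lemma good_sequence : exists (x : nat -> M) (dl : nat -> real),
  forall n, good_extension n x dl (x n) (dl n).
Proof.
pose P n (Y : nat -> M * real) (t : M * real) :=
  good_extension n (fun i => (Y i).1) (fun i => (Y i).2) t.1 t.2.
have [Y hY] : exists Y, forall n, P n Y (Y n).
  apply: (dependent_choice (0, 0)).
  - move=> n Y Y' t hYY'; apply: good_extension_local => i hi; by rewrite hYY'.
  - move=> n Y prev.
    have Dl_pos : forall i, (i < n)%N -> 0 < (Y i).2 by move=> i hi; have [] := prev i hi.
    have [x [del hx]] := good_extension_exists Dl_pos
      (goods_independent (X := fun i => (Y i).1) (Dl := fun i => (Y i).2) prev).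
    by exists (x, del).
by exists (fun i => (Y i).1), (fun i => (Y i).2) => n; exact: hY n.
Qed.

End MaximalAnnihilator.

(** The embedding of l^1(R/I) given a good sequence (x_k). *)

Section L1Embedding.
Variables (R : pzRingType) (nr : R -> real) (M : lmodType R) (op : set (set M)).
Variable d : M -> M -> real.
Hypothesis d_metric : is_metric d.
Hypothesis op_metric : forall U, op U <-> metric_open d U.
Hypothesis M_top : topological_module nr op.
Hypothesis d_complete : metric_complete d.
Hypothesis nr_norm : is_ring_norm nr.
Hypothesis nr_disc : discrete_norm nr.
Hypothesis nr_proper : proper_norm nr.
Variable J : proper_ideal R.
Local Notation I := (iset J).
Local Notation S := (quot_ring J).
Local Notation pi := (qproj J).
Variables (x : nat -> M) (dl : nat -> real).
Hypothesis good : forall n, good_extension nr d I n x dl (x n) (dl n).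

(* every class has a representative of minimal norm, balls being finite *)
Lemma min_rep_exists (s : S) :
  exists r, pi r = s /\ forall r', pi r' = s -> nr r <= nr r'.
Proof.
have [r0 h0] := qproj_surj s.
have [L hL] := finite_ball nr_norm nr_disc nr_proper (nr r0).
have [m [mL Pm hm]] := seq_argmin nr (P := fun r => pi r = s) (hL r0 (lexx _)) h0.
exists m; split => // r' hr'.
case: (lerP (nr r') (nr r0)) => h; first exact: hm (hL _ h) hr'.
exact: le_trans (hm _ (hL r0 (lexx _)) h0) (ltW h).
Qed.

Definition min_rep (s : S) : R := projT1 (cid (min_rep_exists s)).

Lemma min_repP s : pi (min_rep s) = s.
Proof. by have [] := projT2 (cid (min_rep_exists s)). Qed.

Lemma min_rep_min s r : pi r = s -> nr (min_rep s) <= nr r.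
Proof. by have [_ h] := projT2 (cid (min_rep_exists s)); exact: h. Qed.

Definition qnorm (s : S) : real := nr (min_rep s).

Lemma qnorm_quotient : quotient_norm nr pi qnorm.
Proof.
move=> r; split; first by exists (min_rep (pi r)); rewrite min_repP.
by move=> s hs; apply: min_rep_min; rewrite hs.
Qed.

Lemma qnorm_ge0 s : 0 <= qnorm s. Proof. exact: nr_ge0 nr_norm (min_rep s). Qed.

Lemma qnormD s t : qnorm (s + t) <= qnorm s + qnorm t.
Proof.
apply: le_trans (nrD nr_norm _ _); apply: min_rep_min.
by rewrite rmorphD /= !min_repP.
Qed.

Lemma qnormN s : qnorm (- s) = qnorm s.
Proof.
have h u : qnorm (- u) <= qnorm u.
  have pi_opp : pi (- min_rep u) = - u by rewrite rmorphN /= min_repP.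
  by apply: le_trans (min_rep_min pi_opp) _; rewrite (nrN nr_norm).
by apply/eqP; rewrite eq_le h /=; have := h (- s); rewrite opprK.
Qed.

Lemma qnormB s t : qnorm (s - t) <= qnorm s + qnorm t.
Proof. by apply: le_trans (qnormD _ _) _; rewrite qnormN. Qed.

Definition coef_lift (a : nat -> S) : nat -> R := fun k => min_rep (a k).

Definition partial_sum (a : nat -> S) (n : nat) : M := lincomb (coef_lift a) x n.

(* sum_k rep(a_k) x_k, and 0 when the partial sums diverge *)
Definition l1_map (a : nat -> S) : M :=
  if pselect (exists L, metric_converges d (partial_sum a) L) is left e
  then projT1 (cid e) else 0.

Lemma l1_map_eq a L : metric_converges d (partial_sum a) L -> l1_map a = L.
Proof.
move=> h; rewrite /l1_map; case: pselect => [e|ne]; last by exfalso; apply: ne; exists L.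
apply: (limit_unique d_metric _ h); exact: projT2 (cid e).
Qed.

(* |a_k| <= B k! for some B: the sequences of l^1(S) are of this kind *)
Definition fact_bounded (a : nat -> S) : Prop :=
  exists B : nat, forall k, qnorm (a k) <= B%:R * (k`!)%:R.

Lemma good_step n c : coef_bound nr c n.+1 n ->
  d (lincomb c x n) (lincomb c x n.+1) < step_bound dl n.
Proof. by move=> h; have [_ G _ _ _] := good n; rewrite lincombS; exact: G. Qed.

Lemma coef_bound_lift a (B : nat) k : (forall k, qnorm (a k) <= B%:R * (k`!)%:R) ->
  (B <= k.+1)%N -> coef_bound nr (coef_lift a) k.+1 k.
Proof.
move=> hB Bk i _; apply: le_trans (hB i) _; apply: ler_wpM2r; first by rewrite ler0n.
by rewrite ler_nat.
Qed.

Lemma step_bound_le k : step_bound dl k <= 1 / 2 ^+ k.+1.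
Proof.
rewrite /step_bound; apply: ler_wpM2r; first by rewrite invr_ge0 exprn_ge0.
exact: min_prefix_le1.
Qed.

Lemma partial_sum_converges a : fact_bounded a ->
  metric_converges d (partial_sum a) (l1_map a).
Proof.
move=> [B hB].
have [L [hL _]] := geometric_limit d_metric d_complete (u := partial_sum a) (m := B) ler01
  (fun k hk => ltW (lt_le_trans (good_step (coef_bound_lift hB (leqW hk))) (step_bound_le k))).
by rewrite (l1_map_eq hL).
Qed.

(* x_k lies in N, so only the class of the coefficient matters *)
Lemma scale_class k u v : pi u = pi v -> u *: x k = v *: x k.
Proof.
have [Nx _ _ _ _] := good k.
move=> /qproj_eq h; apply/eqP; rewrite -subr_eq0 -scalerBl; apply/eqP; exact: Nx.
Qed.

Lemma partial_sumD a b n :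
  partial_sum (fun k => a k + b k) n = partial_sum a n + partial_sum b n.
Proof.
rewrite /partial_sum /lincomb -big_split; apply: eq_bigr => i _ /=.
by rewrite -scalerDl; apply: scale_class; rewrite /coef_lift rmorphD /= !min_repP.
Qed.

Lemma partial_sumZ a r n : partial_sum (fun k => pi r * a k) n = r *: partial_sum a n.
Proof.
rewrite /partial_sum /lincomb scaler_sumr; apply: eq_bigr => i _ /=.
by rewrite scalerA; apply: scale_class; rewrite /coef_lift rmorphM /= !min_repP.
Qed.

Lemma l1_mapD a b : fact_bounded a -> fact_bounded b ->
  l1_map (fun k => a k + b k) = l1_map a + l1_map b.
Proof.
move=> ha hb; apply: l1_map_eq.
have -> : partial_sum (fun k => a k + b k) = (fun n => partial_sum a n + partial_sum b n).
  by apply: funext => n; exact: partial_sumD.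
by apply: (limit_add d_metric op_metric M_top); exact: partial_sum_converges.
Qed.

Lemma l1_mapZ a r : fact_bounded a -> l1_map (fun k => pi r * a k) = r *: l1_map a.
Proof.
move=> ha; apply: l1_map_eq.
have -> : partial_sum (fun k => pi r * a k) = (fun n => r *: partial_sum a n).
  by apply: funext => n; exact: partial_sumZ.
by apply: (limit_scale d_metric op_metric M_top); exact: partial_sum_converges.
Qed.

Lemma fact_boundedB a b : fact_bounded a -> fact_bounded b ->
  fact_bounded (fun k => a k - b k).
Proof.
move=> [A hA] [B hB]; exists (A + B)%N => k; apply: le_trans (qnormB _ _) _.
by rewrite natrD mulrDl lerD.
Qed.

(* injectivity: if c_j is nonzero, the partial sums from K = max(B, j) on stay
   at distance >= dl K from 0, up to a tail of total size < dl K *)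
Lemma l1_map_eq0 c : fact_bounded c -> l1_map c = 0 -> forall k, c k = 0.
Proof.
move=> [B hB] h0 j; apply: contrapT => cj_neq0.
pose K := maxn B j.
have hb : coef_bound nr (coef_lift c) K.+1 K.
  by apply: coef_bound_lift hB _; apply: leqW; exact: leq_maxl.
have nIcj : ~ I (coef_lift c j).
  move=> hI; apply: cj_neq0; rewrite -(min_repP (c j)).
  have : pi (min_rep (c j)) = pi 0 by apply/qproj_eq; rewrite subr0.
  by rewrite rmorph0.
have [_ _ _ dl_pos G] := good K.
have far := G (coef_lift c) hb (ex_intro2 _ _ j (leq_maxr B j) nIcj).
rewrite -lincombS in far.
have step : forall k, (K.+1 <= k)%N ->
    d (partial_sum c k) (partial_sum c k.+1) <= dl K / 2 ^+ k.+1.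
  move=> k hk.
  have hbk : coef_bound nr (coef_lift c) k.+1 k.
    apply: coef_bound_lift hB _; apply: leq_trans (leq_maxl B j) _.
    by apply: leqW; exact: ltnW.
  apply: ltW; apply: lt_le_trans (good_step hbk) _.
  rewrite /step_bound; apply: ler_wpM2r; first by rewrite invr_ge0 exprn_ge0.
  exact: min_prefix_le.
have [L [hL hLb]] := geometric_limit d_metric d_complete (u := partial_sum c) (m := K.+1)
  (ltW dl_pos) step.
have L0 : L = 0 by rewrite -(l1_map_eq hL).
have := hLb K.+1 (leqnn _); rewrite L0 distC //.
have := pow_lt K dl_pos.
by rewrite /partial_sum in far *; lra.
Qed.

Lemma in_l1_fact_bounded a : in_l1 qnorm a -> fact_bounded a.
Proof.
move=> ha.
have u_ge0 : forall k, 0 <= qnorm (a k) / (k`!)%:R.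
  by move=> k; apply: divr_ge0 => //; exact: qnorm_ge0.
have hle := term_le_series u_ge0 ha.
set Lm := limn _ in hle.
have [B hB] : exists B : nat, Lm < B%:R.
  by exists (Num.Def.archi_bound Lm); apply: archi_boundP; exact: le_trans (hle 0%N).
exists B => k.
have fk : (0 : real) < (k`!)%:R by rewrite ltr0n fact_gt0.
have := hle k; rewrite ler_pdivrMr // => h.
by apply: le_trans h _; apply: ler_wpM2r; [exact: ltW | exact: ltW].
Qed.

Lemma l1_term a b k : in_l1 qnorm a -> in_l1 qnorm b ->
  qnorm (a k - b k) / (k`!)%:R <= l1_dist qnorm a b.
Proof.
move=> ha hb.
have u_ge0 : forall k, 0 <= qnorm (a k - b k) / (k`!)%:R.
  by move=> i; apply: divr_ge0 => //; exact: qnorm_ge0.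
apply: term_le_series => //.
apply: (series_le_cvg u_ge0 _ _ (is_cvg_seriesD ha hb)) => i /=.
  by apply: addr_ge0; apply: divr_ge0 => //; exact: qnorm_ge0.
by rewrite -mulrDl; apply: ler_wpM2r; [rewrite invr_ge0 ler0n | exact: qnormB].
Qed.

Lemma l1_close_coefs a b (th : real) K : 0 < th -> (forall r, nr r < th -> r = 0) ->
  in_l1 qnorm a -> in_l1 qnorm b -> l1_dist qnorm a b < Num.min th 1 / (K`!)%:R ->
  (forall k, qnorm (b k - a k) <= 1%:R * (k`!)%:R) /\
  (forall k, (k <= K)%N -> coef_lift (fun k => b k - a k) k = 0).
Proof.
move=> th_gt0 hth ha hb hab.
set q := Num.min th 1 / (K`!)%:R.
have fK_gt0 : (0 : real) < (K`!)%:R by rewrite ltr0n fact_gt0.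
have q_gt0 : 0 < q by rewrite divr_gt0 // lt_min th_gt0 ltr01.
have q_le1 : q <= 1.
  by rewrite ler_pdivrMr // mul1r ge_min ler1n fact_gt0 orbT.
have qK : q * (K`!)%:R <= th by rewrite divfK ?gt_eqF // ge_min lexx.
have close : forall k, qnorm (b k - a k) < q * (k`!)%:R.
  move=> k; have fk : (0 : real) < (k`!)%:R by rewrite ltr0n fact_gt0.
  rewrite -ltr_pdivrMr // -opprB qnormN.
  exact: le_lt_trans (l1_term k ha hb) hab.
split=> [k|k kK].
- rewrite mul1r; apply/ltW/(lt_le_trans (close k)).
  by rewrite ler_piMl ?ler0n.
- apply: hth; apply: lt_le_trans (close k) (le_trans _ qK).
  by apply: ler_wpM2l; [exact: ltW | rewrite ler_nat leq_fact].
Qed.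

Lemma l1_map_tail_small c K : (forall k, qnorm (c k) <= 1%:R * (k`!)%:R) ->
  (forall k, (k <= K)%N -> coef_lift c k = 0) -> d 0 (l1_map c) <= 1 / 2 ^+ K.+1.
Proof.
move=> c_bnd c0.
have P0 : partial_sum c K.+1 = 0.
  rewrite /partial_sum /lincomb big1 // => i _.
  by rewrite c0 ?scale0r // -ltnS; exact: ltn_ord.
have step : forall k, (K.+1 <= k)%N ->
    d (partial_sum c k) (partial_sum c k.+1) <= 1 / 2 ^+ k.+1.
  move=> k hk; apply/ltW/(lt_le_trans _ (step_bound_le k)).
  by apply: good_step; exact: coef_bound_lift c_bnd _.
have [L [hL hLb]] :=
  geometric_limit d_metric d_complete (u := partial_sum c) (m := K.+1) ler01 step.
by rewrite (l1_map_eq hL) -P0; exact: hLb.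
Qed.

(* continuity: l^1-close sequences differ by a sequence with vanishing
   initial coefficients, whose image is small *)
Lemma l1_map_continuous a W : in_l1 qnorm a -> op W -> W (l1_map a) ->
  exists2 e : real, 0 < e &
    forall b, in_l1 qnorm b -> l1_dist qnorm a b < e -> W (l1_map b).
Proof.
move=> ha oW Wa.
have [rho rho_gt0 hrho] := open_translate d_metric op_metric M_top oW Wa.
have [K hK] := pow_small ler01 rho_gt0.
have [th th_gt0 hth] := discrete_threshold nr_norm nr_disc.
have fK_gt0 : (0 : real) < (K`!)%:R by rewrite ltr0n fact_gt0.
exists (Num.min th 1 / (K`!)%:R); first by rewrite divr_gt0 // lt_min th_gt0 ltr01.
move=> b hb hab.
have [c_bnd c0] := l1_close_coefs th_gt0 hth ha hb hab.
have c_fb : fact_bounded (fun k => b k - a k) by exists 1%N.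
have -> : b = (fun k => a k + (b k - a k)) by apply: funext => k; rewrite addrC subrK.
rewrite l1_mapD //; last exact: in_l1_fact_bounded.
apply: hrho.
apply: le_lt_trans (l1_map_tail_small c_bnd c0) _.
exact: le_lt_trans (pow_mono ler01 (leqnSn K)) hK.
Qed.

Lemma l1_map_embedding : l1_embedding op pi qnorm l1_map.
Proof.
split.
- by move=> a b ha hb; apply: l1_mapD; exact: in_l1_fact_bounded.
- by move=> r a ha; apply: l1_mapZ; exact: in_l1_fact_bounded.
- move=> a b ha hb e.
  have hab := fact_boundedB (in_l1_fact_bounded ha) (in_l1_fact_bounded hb).
  have a_eq : a = (fun k => b k + (a k - b k)) by apply: funext => k; rewrite addrC subrK.
  have h0 : l1_map (fun k => a k - b k) = 0.
    move: e; rewrite {1}a_eq l1_mapD //; last exact: in_l1_fact_bounded.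
    by move=> e; apply: (addrI (l1_map b)); rewrite addr0.
  apply: funext => k; apply/eqP; rewrite -subr_eq0; apply/eqP.
  exact: l1_map_eq0 hab h0 k.
- by move=> a W ha oW Wa; exact: l1_map_continuous.
Qed.

Lemma l1_embeds_of_good : l1_quotient_embeds nr op.
Proof.
exists S, pi, qnorm, l1_map; split.
- exact: qproj_surj.
- exact: qnorm_quotient.
- exact: l1_map_embedding.
Qed.

End L1Embedding.

(** Exclusivity: l^1(S) does not inject into a countable module. *)

Lemma bool_seq_uncountable (g : (nat -> bool) -> nat) : ~ injective g.
Proof.
move=> g_inj.
pose h n : nat -> bool := if pselect (exists t, g t = n) is left e then projT1 (cid e)
  else (fun _ => false).
pose t0 k := ~~ h k k.
have ht : h (g t0) = t0.
  rewrite /h; case: pselect => [e|ne]; last by exfalso; apply: ne; exists t0.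
  by apply: g_inj; exact: projT2 (cid e).
have diag : t0 (g t0) = ~~ h (g t0) (g t0) by [].
have := congr1 (fun t => t (g t0)) ht; rewrite /= diag.
by case: (h (g t0) (g t0)).
Qed.

(* the 0/1-sequences lie in l^1(S) and stay distinct, since 1 <> 0 in S *)
Lemma countable_no_l1_embedding (R : pzRingType) (nr : R -> real) (M : lmodType R)
    (op : set (set M)) :
  is_ring_norm nr -> countable [set: M] -> ~ l1_quotient_embeds nr op.
Proof.
move=> nr_norm M_count [S [pi [nS [f [pi_surj nS_quot [_ _ f_inj _]]]]]].
have [hM hM_inj] := countable_injP _ M_count.
have nS_ge0 : forall s, 0 <= nS s.
  move=> s; have [r <-] := pi_surj s; have [[s' [_ ->]] _] := nS_quot r.
  exact: nr_ge0 nr_norm s'.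
pose a (t : nat -> bool) : nat -> S := fun k => if t k then 1 else 0.
pose C := nS 1 + nS 0.
have a_l1 : forall t, in_l1 nS (a t).
  move=> t; rewrite /in_l1.
  have exp_cvg := is_cvg_seriesZ (k := C) (is_cvg_series_exp_coeff (1 : real)).
  apply: (series_le_cvg _ _ _ exp_cvg) => k.
  - by apply: divr_ge0.
  - change (0 <= C * exp_coeff 1 k); rewrite exp_coeffE /= expr1n mulr1.
    by apply: mulr_ge0; [rewrite addr_ge0 | rewrite invr_ge0].
  - change (nS (a t k) / (k`!)%:R <= C * exp_coeff 1 k); rewrite exp_coeffE /= expr1n mulr1.
    apply: ler_wpM2r; first by rewrite invr_ge0.
    by rewrite /a /C; case: (t k); rewrite ?lerDl ?lerDr.
apply: (@bool_seq_uncountable (fun t => hM (f (a t)))) => t t' e.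
have e1 : f (a t) = f (a t') by apply: hM_inj => //; rewrite inE.
have e2 := f_inj _ _ (a_l1 t) (a_l1 t') e1.
apply: funext => k; have := congr1 (fun u => u k) e2; rewrite /a.
by case: (t k); case: (t' k) => //= /eqP; rewrite ?oner_eq0 // eq_sym oner_eq0.
Qed.

Theorem theorem1p2 (R : pzRingType) (nr : R -> real) (M : lmodType R)
    (op : set (set M)) :
  is_ring_norm nr -> left_noetherian R -> discrete_norm nr -> proper_norm nr ->
  polish_module nr op ->
  exactly_one (countable [set: M]) (l1_quotient_embeds nr op).
Proof.
move=> nr_norm noeth nr_disc nr_proper
  [M_top [_ [D [D_count D_dense]] [d [d_metric op_metric d_complete]]]].
split; last by move=> [M_count emb]; exact: countable_no_l1_embedding nr_norm M_count emb.
case: (pselect (countable [set: M])) => M_count; [by left | right].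
have [I [I_ideal I_uncount I_max]] := maximal_annihilator_ideal noeth M_count.
pose J := ProperIdeal I_ideal (uncountable_annihilator_proper I_uncount).
have [x [dl good]] := good_sequence d_metric op_metric M_top d_complete noeth
  nr_norm nr_disc nr_proper D_count D_dense I_ideal I_uncount I_max.
exact: (l1_embeds_of_good d_metric op_metric M_top d_complete nr_norm nr_disc nr_proper
  (J := J) good).
Qed.
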